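(* If $f\colon X\to Y$ is an asymptotically Lipschitz function of metric spaces, then $\operatorname{asdim}_{AN}(X)\le \operatorname{asdim}_{AN}(f)+\operatorname{asdim}_{AN}(Y)$.
   Context: $f$ is asymptotically Lipschitz if there are constants $a,b\ge0$ with $d_Y(f(x),f(y))\le a\,d_X(x,y)+b$ for all $x,y$. For a metric space $X$, an $n$-dimensional control function is $D_X\colon\mathbb R_+\to\mathbb R_+$ such that for each $r>0$ there are families $\mathcal U_1,\dots,\mathcal U_{n+1}$ of subsets of $X$, each $r$-disjoint (points in different members at distance $\ge r$), with members of diameter $\le D_X(r)$, whose union covers $X$. $\operatorname{asdim}_{AN}(X)\le n$ iff $X$ has an $n$-dimensional control function of the form $D_X(r)=cr+b$ with $b,c\ge0$. For $r>0$, the $r$-components of $A\subset X$ are the classes of points of $A$ joined by finite sequences in $A$ with consecutive distances $\le r$. An $m$-dimensional control function of $f$ is $D_f\colon\mathbb R_+\times\mathbb R_+\to\mathbb R_+$ such that for all $r_X,R_Y>0$ every $A\subset X$ with $\operatorname{diam} f(A)\le R_Y$ is a union of $m+1$ sets whose $r_X$-components have diameter $\le D_f(r_X,R_Y)$. $\operatorname{asdim}_{AN}(f)$ is the minimal $m$ for which $f$ has an $m$-dimensional control function of the form $D_f(r_X,R_Y)=a r_X+bR_Y+c$ (constants $a,b,c$). *)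

From Stdlib Require Import Reals Relations.
Open Scope R_scope.

Record MetricSpace := {
  carrier :> Type;
  dist : carrier -> carrier -> R;
  dist_nonneg : forall x y, 0 <= dist x y;
  dist_eq0 : forall x y, dist x y = 0 <-> x = y;
  dist_sym : forall x y, dist x y = dist y x;
  dist_tri : forall x y z, dist x z <= dist x y + dist y z
}.

Arguments dist {m} _ _.

Definition asymp_lipschitz {X Y : MetricSpace} (f : X -> Y) : Prop :=
  exists a b, 0 <= a /\ 0 <= b /\
    forall x y, dist (f x) (f y) <= a * dist x y + b.

Definition diam_le {X : MetricSpace} (A : X -> Prop) (D : R) : Prop :=
  forall x y, A x -> A y -> dist x y <= D.

Definition r_disjoint {X : MetricSpace} (r : R) (U : (X -> Prop) -> Prop) : Prop :=
  forall A B, U A -> U B -> A <> B ->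
    forall x y, A x -> B y -> r <= dist x y.

Definition control_fun {X : MetricSpace} (n : nat) (D : R -> R) : Prop :=
  (forall r, 0 <= r -> 0 <= D r) /\
  forall r, 0 < r ->
    exists U : nat -> ((X -> Prop) -> Prop),
      (forall i, (i <= n)%nat -> r_disjoint r (U i)) /\
      (forall i A, (i <= n)%nat -> U i A -> diam_le A (D r)) /\
      (forall x : X, exists i A, (i <= n)%nat /\ U i A /\ A x).

Definition asdimAN_le (X : MetricSpace) (n : nat) : Prop :=
  exists c b, 0 <= c /\ 0 <= b /\ @control_fun X n (fun r => c * r + b).

Definition r_step {X : MetricSpace} (A : X -> Prop) (r : R) : relation X :=
  fun x y => A x /\ A y /\ dist x y <= r.

Definition same_r_component {X : MetricSpace} (A : X -> Prop) (r : R) (x y : X) : Prop :=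
  A x /\ A y /\ clos_refl_trans X (r_step A r) x y.

Definition r_components_diam_le {X : MetricSpace} (A : X -> Prop) (r D : R) : Prop :=
  forall x y, same_r_component A r x y -> dist x y <= D.

Definition map_control_fun {X Y : MetricSpace} (f : X -> Y) (m : nat)
    (Df : R -> R -> R) : Prop :=
  (forall rX RY, 0 <= rX -> 0 <= RY -> 0 <= Df rX RY) /\
  forall rX RY, 0 < rX -> 0 < RY ->
    forall A : X -> Prop,
      diam_le (fun y => exists x, A x /\ f x = y) RY ->
      exists B : nat -> (X -> Prop),
        (forall x, A x <-> exists i, (i <= m)%nat /\ B i x) /\
        (forall i, (i <= m)%nat -> r_components_diam_le (B i) rX (Df rX RY)).

Definition asdimAN_map_le {X Y : MetricSpace} (f : X -> Y) (m : nat) : Prop :=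
  exists a b c, 0 <= a /\ 0 <= b /\ 0 <= c /\
    map_control_fun f m (fun rX RY => a * rX + b * RY + c).

(* The argument works with covers of X by colours Q 0, ..., Q q in which
   every point misses at most d colours.  Pulling back an n-dimensional cover of
   Y gives n + 1 colours whose r-chains have linearly bounded image; pulling back,
   member by member, the m-dimensional decompositions of f over such a cover
   gives m + 1 colours whose r-chains have linearly bounded diameter over every
   bounded subset of Y.  An Ostrand-type step (thicken every colour by r and add
   the points that are r-close only to colours they already have) adds a colour
   without raising the number of missed ones, at a linear cost in the scale.
   With m + n + 1 colours, a point misses at most n colours of the first cover
   and at most m of the second, so it lies in a colour common to both, whose
   r-components have linearly bounded diameter. *)

From Pilot Require Import Defs.
From Stdlib Require Import Reals Lra Lia Psatz Relations Classical ClassicalEpsilon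
  FunctionalExtensionality PropExtensionality.
(* [Reals] also exports a [dist]. *)
Import Defs.

Section Counting.

Open Scope nat_scope.

Implicit Types (P Q : nat -> Prop) (q : nat).

Definition fails (A : Prop) : nat := if excluded_middle_informative A then 0 else 1.

Fixpoint misses P q : nat :=
  match q with
  | O => fails (P O)
  | S q' => misses P q' + fails (P (S q'))
  end.

Ltac decide_fails := unfold fails; repeat destruct excluded_middle_informative.

Lemma misses_all_fail P q : (forall l, l <= q -> ~ P l) -> misses P q = S q.
Proof.
  induction q as [|q IH]; intros H; simpl; [|rewrite IH by (intros l Hl; apply H; lia)];
    decide_fails; solve [lia | exfalso; eapply H; eauto].
Qed.

Lemma misses_anti P (P' : nat -> Prop) q : (forall l, l <= q -> P l -> P' l) ->
  misses P' q <= misses P q.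
Proof.
  induction q as [|q IH]; intros H; simpl; [|specialize (IH (fun l Hl => H l ltac:(lia)))];
    decide_fails; solve [lia | exfalso; eauto].
Qed.

Lemma misses_lt P (P' : nat -> Prop) q j : (forall l, l <= q -> P l -> P' l) ->
  j <= q -> P' j -> ~ P j -> misses P' q < misses P q.
Proof.
  induction q as [|q IH]; intros H Hj P'j Pj; simpl.
  - replace j with 0 in * by lia; decide_fails; solve [lia | tauto].
  - pose proof (misses_anti P P' q (fun l Hl => H l ltac:(lia))).
    destruct (Nat.eq_dec j (S q)) as [->|Hne].
    + decide_fails; solve [lia | tauto].
    + specialize (IH (fun l Hl => H l ltac:(lia)) ltac:(lia) P'j Pj).
      decide_fails; solve [lia | exfalso; eauto].
Qed.

Lemma misses_le_of_ex P q : (exists l, l <= q /\ P l) -> misses P q <= q.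
Proof.
  intros [l [Hl Pl]].
  pose proof (misses_lt (fun _ => False) P q l (fun _ _ F => False_ind _ F) Hl Pl (fun F => F))
    as Hlt.
  rewrite (misses_all_fail (fun _ => False)) in Hlt; auto; lia.
Qed.

Lemma ex_of_misses_le P q : misses P q <= q -> exists l, l <= q /\ P l.
Proof.
  intros H; apply NNPP; intros Hn.
  rewrite misses_all_fail in H; [lia|]; intros l Hl Pl; eauto.
Qed.

Lemma misses_disjoint P Q q : (forall l, l <= q -> ~ (P l /\ Q l)) ->
  S q <= misses P q + misses Q q.
Proof.
  induction q as [|q IH]; intros H; simpl; [|specialize (IH (fun l Hl => H l ltac:(lia)))];
    decide_fails; solve [lia | exfalso; eapply H; eauto].
Qed.

Lemma ex_common_of_misses_le P Q q d e :
  misses P q <= d -> misses Q q <= e -> d + e <= q -> exists l, l <= q /\ P l /\ Q l.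
Proof.
  intros HP HQ Hq; apply NNPP; intros Hn.
  assert (H := misses_disjoint P Q q (fun l Hl HPQ => Hn (ex_intro _ l (conj Hl HPQ)))); lia.
Qed.

End Counting.

Notation chain A s := (clos_refl_trans _ (r_step A s)).

Section Chains.

Variable X : MetricSpace.
Implicit Types (A B S T F : X -> Prop) (x y z u : X).

Lemma dist_xx x : dist x x = 0.
Proof. now apply dist_eq0. Qed.

Lemma chain_cases A s x y : chain A s x y -> x = y \/ (A x /\ A y).
Proof.
  induction 1 as [x y [Ax [Ay _]]|x|x y z _ IHxy _ IHyz]; [tauto|tauto|].
  destruct IHxy as [<-|[Ax Ay]], IHyz as [<-|[Ay' Az]]; tauto.
Qed.

Lemma chain_mono A B s s' x y : (forall u, A u -> B u) -> s <= s' ->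
  chain A s x y -> chain B s' x y.
Proof.
  intros HAB Hs; induction 1 as [x y [Ax [Ay dxy]]| |]; [|apply rt_refl|eapply rt_trans; eauto].
  apply rt_step; repeat split; auto; lra.
Qed.

Lemma chain_inter_l A F s s' x y : s <= s' ->
  chain (fun u => A u /\ F u) s x y -> chain A s' x y.
Proof. intros Hs; apply chain_mono; [now intros u [Au _]|auto]. Qed.

Lemma chain_sym A s x y : chain A s x y -> chain A s y x.
Proof.
  induction 1 as [x y [Ax [Ay dxy]]| |]; [|apply rt_refl|eapply rt_trans; eauto].
  apply rt_step; repeat split; auto; now rewrite dist_sym.
Qed.

Lemma chain_restrict A B s x y : chain A s x y ->
  (forall u, chain A s x u -> A u -> B u) -> chain B s x y.
Proof.
  intros H; apply clos_rt_rtn1_iff in H.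
  induction H as [|y z [Ay [Az dyz]] Hxy IH]; intros HB; [apply rt_refl|].
  apply clos_rt_rtn1_iff in Hxy.
  apply rt_trans with y; [now apply IH|].
  apply rt_step; repeat split; auto.
  apply HB; auto; apply rt_trans with y; [|apply rt_step]; repeat split; auto.
Qed.

Lemma chain_invariant A B s x y : (forall u v, B u -> A v -> dist u v <= s -> B v) ->
  chain A s x y -> B x -> B y.
Proof. intros HB; induction 1 as [x y [_ [Ay dxy]]| |]; eauto. Qed.

Definition chain_diam_le A s D := forall x y, chain A s x y -> dist x y <= D.

Lemma chain_diam_le_weaken A s D D' : D <= D' -> chain_diam_le A s D -> chain_diam_le A s D'.
Proof. intros HD HA x y H; specialize (HA x y H); lra. Qed.

Lemma chain_diam_le_of_components A s D : 0 <= D ->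
  r_components_diam_le A s D -> chain_diam_le A s D.
Proof.
  intros HD HA x y Hc; destruct (chain_cases _ _ _ _ Hc) as [<-|[Ax Ay]].
  - rewrite dist_xx; lra.
  - apply HA; repeat split; auto.
Qed.

Lemma chain_end A s x y : chain A s x y -> A x -> A y.
Proof. now intros H Ax; destruct (chain_cases _ _ _ _ H) as [<-|[_ Ay]]. Qed.

(* The stretches of a chain spent in [T] are short, so consecutive visits of
   [S] are [sig]-close and form a chain in [S]. *)
Lemma chain_diam_le_union S T sig tau ES ET :
  0 <= tau -> 0 <= ES -> 0 <= ET -> ET + 2 * tau <= sig ->
  chain_diam_le S sig ES -> chain_diam_le T tau ET ->
  chain_diam_le (fun u => S u \/ T u) tau (ES + 2 * ET + 2 * tau).
Proof.
  intros Htau HES HET Hsig HS HT.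
  set (near := fun u s => u = s \/ exists t, T t /\ dist s t <= tau /\ chain T tau t u).
  assert (Hnear : forall u s, near u s -> dist u s <= ET + tau).
  { intros u s [<-|[t [_ [dst Ht]]]]; [rewrite dist_xx; lra|].
    pose proof (HT _ _ Ht); pose proof (dist_tri X u t s).
    rewrite (dist_sym X t u), (dist_sym X t s) in *; lra. }
  assert (Inv : forall x y, chain (fun u => S u \/ T u) tau x y -> (S x \/ T x) ->
    (T x /\ chain T tau x y) \/
    exists s1 s2, S s1 /\ S s2 /\ chain S sig s1 s2 /\ near x s1 /\ near y s2).
  { intros x y H Ux; apply clos_rt_rtn1_iff in H.
    induction H as [|y z [_ [[Sz|Tz] dyz]] _ IH].
    - destruct Ux as [Sx|Tx]; [right; exists x, x|left]; repeat split; auto;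
        [apply rt_refl|now left|now left|apply rt_refl].
    - right; destruct IH as [[Tx Hxy]|[s1 [s2 [S1 [S2 [H12 [N1 [<-|[t [Tt [dst Hty]]]]]]]]]]].
      + exists z, z; repeat split; [auto|auto|apply rt_refl| |left; auto].
        right; exists y; repeat split; [eapply chain_end; eauto|now rewrite dist_sym|].
        now apply chain_sym.
      + exists s1, z; repeat split; auto; [|left; auto].
        apply rt_trans with y; [auto|apply rt_step; repeat split; auto; lra].
      + exists s1, z; repeat split; auto; [|left; auto].
        apply rt_trans with s2; [auto|apply rt_step; repeat split; auto].
        pose proof (HT _ _ Hty); pose proof (dist_tri X s2 t y).
        pose proof (dist_tri X s2 y z); lra.
    - destruct IH as [[Tx Hxy]|[s1 [s2 [S1 [S2 [H12 [N1 N2]]]]]]].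
      + left; split; [auto|apply rt_trans with y; [auto|apply rt_step]].
        repeat split; [eapply chain_end; eauto|auto|auto].
      + right; exists s1, s2; repeat split; auto; right.
        destruct N2 as [<-|[t [Tt [dst Hty]]]]; [exists z; repeat split; auto; apply rt_refl|].
        exists t; repeat split; auto; apply rt_trans with y; [auto|apply rt_step].
        repeat split; [eapply chain_end; eauto|auto|auto]. }
  intros x y H; destruct (chain_cases _ _ _ _ H) as [<-|[Ux _]]; [rewrite dist_xx; lra|].
  destruct (Inv x y H Ux) as [[_ Hxy]|[s1 [s2 [_ [_ [H12 [N1 N2]]]]]]].
  - pose proof (HT _ _ Hxy); lra.
  - pose proof (HS _ _ H12); pose proof (Hnear _ _ N1); pose proof (Hnear _ _ N2).
    pose proof (dist_tri X x s1 y); pose proof (dist_tri X s1 s2 y).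
    rewrite (dist_sym X s2 y) in *; lra.
Qed.

Definition thicken A t : X -> Prop := fun x => exists z, A z /\ dist x z <= t.

Lemma diam_le_thicken A D t : diam_le A D -> diam_le (thicken A t) (D + 2 * t).
Proof.
  intros HA x y [x' [Ax' dx]] [y' [Ay' dy]].
  pose proof (HA x' y' Ax' Ay'); pose proof (dist_tri X x x' y); pose proof (dist_tri X x' y' y).
  rewrite (dist_sym X y' y) in *; lra.
Qed.

Lemma chain_thicken_shadow S F (F' : X -> Prop) s t x y z0 :
  (forall u z, F u -> dist u z <= t -> S z -> F' z) ->
  chain (fun u => thicken S t u /\ F u) s x y -> S z0 -> dist x z0 <= t ->
  exists z, S z /\ dist y z <= t /\ chain (fun u => S u /\ F' u) (s + 2 * t) z0 z.
Proof.
  intros HF H; apply clos_rt_rt1n_iff in H; revert z0.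
  induction H as [x|x x1 y [[_ Fx] [[[z1 [Sz1 dz1]] Fx1] dxx1]] _ IH];
    intros z0 Sz0 dz0.
  - exists z0; repeat split; auto; apply rt_refl.
  - destruct (IH z1 Sz1 dz1) as [z [Sz [dz Hc]]].
    exists z; repeat split; auto.
    apply rt_trans with z1; [apply rt_step|auto]; repeat split; eauto.
    pose proof (dist_tri X z0 x z1); pose proof (dist_tri X x x1 z1).
    rewrite (dist_sym X z0 x) in *; lra.
Qed.

End Chains.

Arguments chain_diam_le {X} A s D.
Arguments thicken {X} A t _.

Section ExtendCover.

Variable X : MetricSpace.
Implicit Types (Q : nat -> X -> Prop) (F : X -> Prop) (x y : X).

Definition saturated Q q t : X -> Prop :=
  fun x => forall j, (j <= q)%nat -> thicken (Q j) t x -> Q j x.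

Definition extend_cover Q q t : nat -> X -> Prop :=
  fun l x => ((l <= q)%nat /\ thicken (Q l) t x) \/ (l = S q /\ saturated Q q t x).

(* A point outside the new colour [S q] is [t]-close to some [Q j] it is not
   in, hence gains the colour [j]. *)
Lemma misses_extend_cover Q q t d x : 0 <= t ->
  (misses (fun l => Q l x) q <= d)%nat ->
  (misses (fun l => extend_cover Q q t l x) (S q) <= d)%nat.
Proof.
  intros Ht HQ; simpl.
  assert (Hgrow : forall l, (l <= q)%nat -> Q l x -> extend_cover Q q t l x).
  { intros l Hl Ql; left; split; auto; exists x; split; auto; rewrite dist_xx; lra. }
  pose proof (misses_anti _ _ q Hgrow).
  unfold fails; destruct excluded_middle_informative as [_|Hnew]; [lia|].
  assert (Hns : ~ saturated Q q t x) by (intros Hs; apply Hnew; right; auto).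
  apply not_all_ex_not in Hns as [j Hj].
  apply imply_to_and in Hj as [Hj Hj']; apply imply_to_and in Hj' as [Hth HQj].
  pose proof (misses_lt _ _ q j Hgrow Hj (or_introl (conj Hj Hth)) HQj); lia.
Qed.

Lemma extend_cover_chain_low Q q t F (F' : X -> Prop) s l x y : (l <= q)%nat ->
  (forall u z, F u -> dist u z <= t -> Q l z -> F' z) ->
  chain (fun u => extend_cover Q q t l u /\ F u) s x y ->
  x = y \/ exists z0 z, dist x z0 <= t /\ dist y z <= t /\
    chain (fun u => Q l u /\ F' u) (s + 2 * t) z0 z.
Proof.
  intros Hl HF H.
  assert (Hlow : forall u, extend_cover Q q t l u -> thicken (Q l) t u)
    by (unfold extend_cover; intros u [[_ Hu]|[-> _]]; [auto|lia]).
  destruct (chain_cases _ _ _ _ _ H) as [->|[[Ex _] _]]; [now left|right].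
  destruct (Hlow x Ex) as [z0 [Qz0 dz0]].
  assert (H' : chain (fun u => thicken (Q l) t u /\ F u) s x y)
    by (eapply chain_mono; [|apply Rle_refl|exact H]; intros u [Eu Fu]; auto).
  destruct (chain_thicken_shadow _ _ _ _ _ _ _ _ _ HF H' Qz0 dz0) as [z [_ [dz Hz]]].
  now exists z0, z.
Qed.

Lemma extend_cover_chain_top Q q t F s x y : s <= t ->
  (forall u, exists j, (j <= q)%nat /\ Q j u) ->
  chain (fun u => extend_cover Q q t (S q) u /\ F u) s x y ->
  exists j, (j <= q)%nat /\ chain (fun u => Q j u /\ F u) s x y.
Proof.
  intros Hst Hcov H; destruct (Hcov x) as [j [Hj Qjx]]; exists j; split; auto.
  apply (chain_restrict _ _ _ _ _ _ H); intros u Hxu [_ Fu]; split; auto.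
  refine (chain_invariant _ _ _ _ _ _ _ Hxu Qjx).
  intros v w Qjv [[[Hle _]|[_ Hsat]] _] dvw; [lia|].
  apply Hsat; auto; exists v; split; auto; rewrite dist_sym; lra.
Qed.

End ExtendCover.

Lemma asymp_lipschitz_affine {X Y : MetricSpace} (f : X -> Y) : asymp_lipschitz f ->
  exists L, 0 <= L /\ forall x y, dist (f x) (f y) <= L * (dist x y + 1).
Proof.
  intros [a [b [Ha [Hb Hf]]]]; exists (a + b); split; [lra|].
  intros x y; pose proof (Hf x y); pose proof (dist_nonneg X x y); nra.
Qed.

Lemma asdimAN_le_affine {Y : MetricSpace} n : asdimAN_le Y n ->
  exists K, 0 <= K /\ forall r, 0 < r -> exists U : nat -> ((Y -> Prop) -> Prop),
    (forall i, (i <= n)%nat -> r_disjoint r (U i)) /\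
    (forall i V, (i <= n)%nat -> U i V -> diam_le V (K * (r + 1))) /\
    (forall y, exists i V, (i <= n)%nat /\ U i V /\ V y).
Proof.
  intros [c [b [Hc [Hb [_ HY]]]]]; exists (c + b); split; [lra|].
  intros r Hr; destruct (HY r Hr) as [U [Hdisj [Hdiam Hcov]]].
  exists U; repeat split; auto.
  intros i V Hi HV y y' Vy Vy'; pose proof (Hdiam i V Hi HV y y' Vy Vy'); nra.
Qed.

Lemma asdimAN_map_le_affine {X Y : MetricSpace} (f : X -> Y) m : asdimAN_map_le f m ->
  exists K, 0 <= K /\ forall rX RY, 0 < rX -> 0 < RY -> forall A : X -> Prop,
    diam_le (fun y => exists x, A x /\ f x = y) RY ->
    exists B : nat -> X -> Prop, (forall x, A x -> exists i, (i <= m)%nat /\ B i x) /\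
      forall i, (i <= m)%nat -> chain_diam_le (B i) rX (K * (rX + RY + 1)).
Proof.
  intros [a [b [c [Ha [Hb [Hc [_ HM]]]]]]]; exists (a + b + c); split; [lra|].
  intros rX RY HrX HRY A HA; destruct (HM rX RY HrX HRY A HA) as [B [Hcov HB]].
  exists B; split; [intros x Ax; now apply Hcov|].
  intros i Hi; apply chain_diam_le_weaken with (a * rX + b * RY + c); [nra|].
  apply chain_diam_le_of_components; [nra|auto].
Qed.

Section ImageControlledCovers.

Variables (X Y : MetricSpace) (f : X -> Y) (L : R).
Hypothesis HL : 0 <= L.
Hypothesis Hlip : forall x y, dist (f x) (f y) <= L * (dist x y + 1).

Definition chain_image_diam_le (A : X -> Prop) s D :=
  forall x y, chain A s x y -> dist (f x) (f y) <= D.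

Definition image_controlled_cover d q := exists K, 0 <= K /\ forall r, 0 < r ->
  exists Q : nat -> X -> Prop, (forall x, (misses (fun l => Q l x) q <= d)%nat) /\
    forall l, (l <= q)%nat -> chain_image_diam_le (Q l) r (K * (r + 1)).

(* Pull back a cover of [Y] at a scale exceeding the image of an [r]-step. *)
Lemma image_controlled_cover_init n : asdimAN_le Y n -> image_controlled_cover n n.
Proof.
  intros HY; destruct (asdimAN_le_affine _ HY) as [KY [HKY HU]].
  assert (HK : 0 <= KY * (L + 2)) by nra.
  exists (KY * (L + 2)); split; [auto|]; intros r Hr.
  destruct (HU (L * (r + 1) + 1) ltac:(nra)) as [U [Hdisj [Hdiam Hcov]]].
  exists (fun l x => exists V, U l V /\ V (f x)); split.
  - intros x; apply misses_le_of_ex.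
    destruct (Hcov (f x)) as [i [V [Hi [HV Vx]]]]; eauto.
  - intros l Hl x y Hxy; destruct (chain_cases _ _ _ _ _ Hxy) as [<-|[[V [HV Vx]] _]].
    { rewrite dist_xx; nra. }
    assert (Vy : V (f y)).
    { refine (chain_invariant _ _ (fun u => V (f u)) _ _ _ _ Hxy Vx).
      intros u v Vu [V' [HV' V'v]] duv; destruct (classic (V' = V)) as [<-|Hne]; auto.
      pose proof (Hdisj l Hl V V' HV HV' (fun e => Hne (eq_sym e)) _ _ Vu V'v).
      pose proof (Hlip u v); nra. }
    pose proof (Hdiam l V Hl HV _ _ Vx Vy); nra.
Qed.

Lemma image_controlled_cover_succ d q : (d <= q)%nat ->
  image_controlled_cover d q -> image_controlled_cover d (S q).
Proof.
  intros Hdq [K [HK HQ]]; exists (3 * K + 2 * L); split; [lra|]; intros r Hr.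
  destruct (HQ (3 * r) ltac:(lra)) as [Q [HQm HQb]].
  exists (extend_cover X Q q r); split; [intros x; apply misses_extend_cover; auto; lra|].
  intros l Hl x y Hxy.
  assert (Hxy' : chain (fun u => extend_cover X Q q r l u /\ True) r x y)
    by (eapply chain_mono; [|apply Rle_refl|exact Hxy]; auto).
  destruct (Nat.eq_dec l (S q)) as [->|Hne].
  - assert (Hcov : forall u, exists j, (j <= q)%nat /\ Q j u)
      by (intros u; apply ex_of_misses_le; specialize (HQm u); lia).
    destruct (extend_cover_chain_top _ _ _ _ _ _ _ _ (Rle_refl r) Hcov Hxy') as [j [Hj Hc]].
    pose proof (HQb j Hj x y (chain_inter_l _ _ _ r (3 * r) _ _ ltac:(lra) Hc)); nra.
  - assert (Hlq : (l <= q)%nat) by lia.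
    destruct (extend_cover_chain_low _ _ _ _ _ (fun _ => True) _ _ _ _ Hlq
      (fun _ _ _ _ _ => I) Hxy') as [<-|[z0 [z [dz0 [dz Hc]]]]].
    { rewrite dist_xx; nra. }
    pose proof (HQb l Hlq z0 z (chain_inter_l _ _ _ (r + 2 * r) (3 * r) _ _ ltac:(lra) Hc)).
    pose proof (Hlip x z0); pose proof (Hlip y z).
    pose proof (dist_tri Y (f x) (f z0) (f y)); pose proof (dist_tri Y (f z0) (f z) (f y)).
    rewrite (dist_sym Y (f z) (f y)) in *; nra.
Qed.

End ImageControlledCovers.

Arguments chain_image_diam_le {X Y} f A s D.
Arguments image_controlled_cover {X Y} f d q.

Section FibreControlledCovers.

Variables (X Y : MetricSpace) (f : X -> Y) (L : R).
Hypothesis HL : 0 <= L.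
Hypothesis Hlip : forall x y, dist (f x) (f y) <= L * (dist x y + 1).

Definition chain_diam_over_le (A : X -> Prop) s rho D :=
  forall W : Y -> Prop, diam_le W rho -> chain_diam_le (fun u => A u /\ W (f u)) s D.

Definition fibre_controlled_cover d q := exists K, 0 <= K /\ forall r rho, 0 < r -> 0 <= rho ->
  exists C : nat -> X -> Prop, (forall x, (misses (fun l => C l x) q <= d)%nat) /\
    forall l, (l <= q)%nat -> chain_diam_over_le (C l) r rho (K * (r + rho + 1)).

Lemma chain_diam_over_le_weaken A s rho D D' : D <= D' ->
  chain_diam_over_le A s rho D -> chain_diam_over_le A s rho D'.
Proof. intros HD HA W HW; exact (chain_diam_le_weaken _ _ _ _ _ HD (HA W HW)). Qed.

Lemma chain_diam_over_le_union S T sig tau rho ES ET :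
  0 <= tau -> 0 <= ES -> 0 <= ET -> ET + 2 * tau <= sig ->
  chain_diam_over_le S sig rho ES -> chain_diam_over_le T tau rho ET ->
  chain_diam_over_le (fun u => S u \/ T u) tau rho (ES + 2 * ET + 2 * tau).
Proof.
  intros Htau HES HET Hsig HS HT W HW x y Hxy.
  apply (chain_diam_le_union X (fun u => S u /\ W (f u)) (fun u => T u /\ W (f u)) sig tau);
    auto.
  eapply chain_mono; [|apply Rle_refl|exact Hxy]; intros u [[Su|Tu] Wu]; auto.
Qed.

(* The chain of [C /\ Q] through [x] stays over the image of the [Q]-chain
   through [x], a set of diameter at most [rho]. *)
Lemma chain_diam_le_inter C Q s rho D :
  chain_image_diam_le f Q s rho -> chain_diam_over_le C s rho D ->
  chain_diam_le (fun u => C u /\ Q u) s D.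
Proof.
  intros HQ HC x y Hxy.
  set (W := fun w => exists z, chain Q s x z /\ f z = w).
  assert (HW : diam_le W rho).
  { intros w w' [z [Hz <-]] [z' [Hz' <-]].
    apply HQ; apply rt_trans with x; [apply chain_sym|]; auto. }
  apply (HC W HW), (chain_restrict _ _ _ _ _ _ Hxy).
  intros u Hxu [Cu Qu]; split; [auto|exists u; split; auto].
  eapply chain_mono; [|apply Rle_refl|exact Hxu]; now intros v [_ Qv].
Qed.

Lemma fibre_controlled_cover_succ d q : (d <= q)%nat ->
  fibre_controlled_cover d q -> fibre_controlled_cover d (S q).
Proof.
  intros Hdq [K [HK HC]].
  assert (HKL : 0 <= K * L) by nra.
  exists (3 * K + 2 * (K * L) + 2); split; [lra|]; intros r rho Hr Hrho.
  set (rho' := rho + 2 * (L * (r + 1))).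
  destruct (HC (3 * r) rho' ltac:(lra) ltac:(unfold rho'; nra)) as [C [HCm HCb]].
  exists (extend_cover X C q r); split; [intros x; apply misses_extend_cover; auto; lra|].
  intros l Hl W HW x y Hxy.
  assert (HB : K * (3 * r + rho' + 1) + 2 * r <= (3 * K + 2 * (K * L) + 2) * (r + rho + 1))
    by (unfold rho'; nra).
  destruct (Nat.eq_dec l (S q)) as [->|Hne].
  - assert (Hcov : forall u, exists j, (j <= q)%nat /\ C j u)
      by (intros u; apply ex_of_misses_le; specialize (HCm u); lia).
    destruct (extend_cover_chain_top _ _ _ _ _ _ _ _ (Rle_refl r) Hcov Hxy) as [j [Hj Hc]].
    assert (HW' : diam_le W rho')
      by (intros u v Hu Hv; pose proof (HW u v Hu Hv); unfold rho'; nra).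
    pose proof (HCb j Hj W HW' x y (chain_mono _ _ _ r (3 * r) _ _ (fun _ H => H) ltac:(lra) Hc)).
    nra.
  - assert (Hlq : (l <= q)%nat) by lia.
    set (W' := thicken W (L * (r + 1))).
    assert (HF : forall u z, W (f u) -> dist u z <= r -> C l z -> W' (f z)).
    { intros u z Wu duz _; exists (f u); split; auto.
      rewrite dist_sym; pose proof (Hlip u z); nra. }
    destruct (extend_cover_chain_low _ _ _ _ _ _ _ _ _ _ Hlq HF Hxy) as [<-|[z0 [z [dz0 [dz Hc]]]]].
    { rewrite dist_xx; nra. }
    pose proof (HCb l Hlq W' (diam_le_thicken _ _ _ _ HW) z0 z
      (chain_mono _ _ _ (r + 2 * r) (3 * r) _ _ (fun _ H => H) ltac:(lra) Hc)).
    pose proof (dist_tri X x z0 y); pose proof (dist_tri X z0 z y).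
    rewrite (dist_sym X z y) in *; unfold rho' in *; nra.
Qed.

End FibreControlledCovers.

Arguments chain_diam_over_le {X Y} f A s rho D.
Arguments fibre_controlled_cover {X Y} f d q.

Section PreimageCovers.

Variables (X Y : MetricSpace) (f : X -> Y) (m : nat) (KM KY : R).
Hypothesis HKM : 0 <= KM.
Hypothesis HKY : 0 <= KY.
Hypothesis HM : forall rX RY, 0 < rX -> 0 < RY -> forall A : X -> Prop,
  diam_le (fun y => exists x, A x /\ f x = y) RY ->
  exists B : nat -> X -> Prop, (forall x, A x -> exists i, (i <= m)%nat /\ B i x) /\
    forall i, (i <= m)%nat -> chain_diam_le (B i) rX (KM * (rX + RY + 1)).

(* A set of diameter [rho] meets at most one member of a [(rho + 1)]-disjoint
   family, so the decompositions of the preimages of the members glue. *)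
Lemma preimage_family_pieces (U : (Y -> Prop) -> Prop) rho D sig :
  0 < sig -> 0 <= D -> r_disjoint (rho + 1) U -> (forall V, U V -> diam_le V D) ->
  exists P : nat -> X -> Prop,
    (forall x V, U V -> V (f x) -> exists i, (i <= m)%nat /\ P i x) /\
    forall i, (i <= m)%nat -> chain_diam_over_le f (P i) sig rho (KM * (sig + D + 2)).
Proof.
  intros Hsig HD Hdisj Hdiam.
  assert (Hpieces : forall V, exists B : nat -> X -> Prop, U V ->
    (forall x, V (f x) -> exists i, (i <= m)%nat /\ B i x) /\
    forall i, (i <= m)%nat -> chain_diam_le (B i) sig (KM * (sig + D + 2))).
  { intros V; destruct (classic (U V)) as [HV|HV]; [|exists (fun _ _ => False); tauto].
    (* [D + 1] rather than [D]: the control function of [f] is only used at positive scales. *)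
    destruct (HM sig (D + 1) Hsig ltac:(lra) (fun x => V (f x))) as [B [HBcov HBb]].
    { intros y y' [x [Vx <-]] [x' [Vx' <-]]; pose proof (Hdiam V HV _ _ Vx Vx'); lra. }
    exists B; intros _; split; auto.
    intros i Hi; apply chain_diam_le_weaken with (KM * (sig + (D + 1) + 1)); [lra|auto]. }
  destruct (choice _ Hpieces) as [B HB].
  exists (fun i x => exists V, U V /\ V (f x) /\ B V i x); split.
  - intros x V HV Vx; destruct (proj1 (HB V HV) x Vx) as [i [Hi Bi]].
    exists i; split; [auto|now exists V].
  - intros i Hi W HW x y Hxy.
    destruct (chain_cases _ _ _ _ _ Hxy) as [<-|[[[V [HV [Vx _]]] Wx] _]]; [rewrite dist_xx; nra|].
    apply (proj2 (HB V HV) i Hi), (chain_restrict _ _ _ _ _ _ Hxy).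
    intros u _ [[V' [HV' [V'u B'u]]] Wu]; destruct (classic (V' = V)) as [<-|Hne]; auto.
    pose proof (Hdisj V V' HV HV' (fun e => Hne (eq_sym e)) _ _ Vx V'u).
    pose proof (HW _ _ Wx Wu); lra.
Qed.

Definition preimage_cover_of_families k := exists K, 0 <= K /\
  forall r rho, 0 < r -> 0 <= rho -> forall U : nat -> ((Y -> Prop) -> Prop),
    (forall j, (j < k)%nat -> r_disjoint (rho + 1) (U j) /\
      forall V, U j V -> diam_le V (KY * (rho + 2))) ->
    exists B : nat -> X -> Prop,
      (forall x j V, (j < k)%nat -> U j V -> V (f x) -> exists i, (i <= m)%nat /\ B i x) /\
      forall i, (i <= m)%nat -> chain_diam_over_le f (B i) r rho (K * (r + rho + 1)).

Lemma preimage_cover_of_families_0 : preimage_cover_of_families 0.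
Proof.
  exists 0; split; [lra|]; intros r rho _ _ U _.
  exists (fun _ _ => False); split; [intros x j V Hj; lia|].
  intros i _ W _ x y Hxy; destruct (chain_cases _ _ _ _ _ Hxy) as [<-|[[[] _] _]].
  rewrite dist_xx; lra.
Qed.

Lemma preimage_cover_of_families_succ k :
  preimage_cover_of_families k -> preimage_cover_of_families (S k).
Proof.
  intros [K [HK H]].
  assert (HKMK : 0 <= KM * (K + 2 * KY + 4)) by nra.
  exists (KM * (K + 2 * KY + 4) + 2 * K + 2); split; [lra|].
  intros r rho Hr Hrho U HU.
  destruct (H r rho Hr Hrho U (fun j Hj => HU j ltac:(lia))) as [B [HBcov HBb]].
  set (ET := K * (r + rho + 1)); set (sig := ET + 2 * r).
  assert (HET : 0 <= ET) by (unfold ET; nra).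
  destruct (HU k ltac:(lia)) as [Hdisj Hdiam].
  destruct (preimage_family_pieces (U k) rho (KY * (rho + 2)) sig ltac:(unfold sig; lra)
    ltac:(nra) Hdisj Hdiam) as [P [HPcov HPb]].
  exists (fun i x => P i x \/ B i x); split.
  - intros x j V Hj HV Vx; destruct (Nat.eq_dec j k) as [->|Hne].
    + destruct (HPcov x V HV Vx) as [i [Hi Pi]]; eauto.
    + destruct (HBcov x j V ltac:(lia) HV Vx) as [i [Hi Bi]]; eauto.
  - intros i Hi.
    apply chain_diam_over_le_weaken with (KM * (sig + KY * (rho + 2) + 2) + 2 * ET + 2 * r).
    { assert (0 <= KM * (KY * (2 * r + rho) + 2 * r + 4 * rho + 2)) by (apply Rmult_le_pos; nra).
      unfold sig, ET; nra. }
    apply (chain_diam_over_le_union X Y f _ _ sig); auto; [lra| |unfold sig; lra].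
    apply Rmult_le_pos; [auto|unfold sig; nra].
Qed.

End PreimageCovers.

Lemma fibre_controlled_cover_init (X Y : MetricSpace) (f : X -> Y) m n :
  asdimAN_map_le f m -> asdimAN_le Y n -> fibre_controlled_cover f m m.
Proof.
  intros HM HY.
  destruct (asdimAN_map_le_affine _ _ HM) as [KM [HKM HM']].
  destruct (asdimAN_le_affine _ HY) as [KY [HKY HU]].
  assert (Hfam : preimage_cover_of_families X Y f m KY (S n)).
  { induction (S n); [apply preimage_cover_of_families_0|].
    now apply (preimage_cover_of_families_succ X Y f m KM KY). }
  destruct Hfam as [K [HK H]]; exists K; split; [auto|]; intros r rho Hr Hrho.
  destruct (HU (rho + 1) ltac:(lra)) as [U [Hdisj [Hdiam Hcov]]].
  destruct (H r rho Hr Hrho U) as [B [HBcov HBb]].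
  { intros j Hj; split; [apply Hdisj; lia|].
    intros V HV; replace (rho + 2) with (rho + 1 + 1) by ring; apply (Hdiam j); auto; lia. }
  exists B; split; [|auto]; intros x; apply misses_le_of_ex.
  destruct (Hcov (f x)) as [j [V [Hj [HV Vx]]]]; apply (HBcov x j V); auto; lia.
Qed.

Section Components.

Variable X : MetricSpace.
Implicit Types (A : X -> Prop).

Definition r_component A r x : X -> Prop := same_r_component A r x.

Lemma r_component_eq A r x x' u v : r_component A r x u -> r_component A r x' v ->
  dist u v <= r -> r_component A r x = r_component A r x'.
Proof.
  intros [Ax [Au Hxu]] [Ax' [Av Hx'v]] duv.
  assert (Hxx' : chain A r x x').
  { apply rt_trans with u; [auto|apply rt_trans with v; [|now apply chain_sym]].
    apply rt_step; repeat split; auto. }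
  apply functional_extensionality; intros y; apply propositional_extensionality.
  split; intros [_ [Ay Hy]]; repeat split; auto.
  - exact (rt_trans _ _ _ _ _ (chain_sym _ _ _ _ _ Hxx') Hy).
  - exact (rt_trans _ _ _ _ _ Hxx' Hy).
Qed.

Lemma asdimAN_le_of_chain_diam_le_covers n K : 0 <= K ->
  (forall r, 0 < r -> exists P : nat -> X -> Prop,
    (forall x, exists p, (p <= n)%nat /\ P p x) /\
    forall p, (p <= n)%nat -> chain_diam_le (P p) r (K * (r + 1))) ->
  asdimAN_le X n.
Proof.
  intros HK HP; exists K, K; repeat split; auto; [intros r Hr; nra|].
  intros r Hr; destruct (HP r Hr) as [P [Hcov HPb]].
  exists (fun p B => exists x, P p x /\ B = r_component (P p) r x); repeat split.
  - intros p Hp B B' [x [_ ->]] [x' [_ ->]] Hne u v Hu Hv.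
    apply Rnot_lt_le; intros Huv; apply Hne, (r_component_eq _ _ _ _ u v); auto; lra.
  - intros p B Hp [x [_ ->]] u v [_ [_ Hu]] [_ [_ Hv]].
    replace (K * r + K) with (K * (r + 1)) by ring.
    apply (HPb p Hp u v); apply rt_trans with x; [now apply chain_sym|auto].
  - intros x; destruct (Hcov x) as [p [Hp Px]].
    exists p, (r_component (P p) r x); repeat split; auto; [now exists x|apply rt_refl].
Qed.

End Components.

Theorem mainTheorem5 (X Y : MetricSpace) (f : X -> Y) (m n : nat) :
  asymp_lipschitz f ->
  asdimAN_map_le f m ->
  asdimAN_le Y n ->
  asdimAN_le X (m + n).
Proof.
  intros Hf HM HY.
  destruct (asymp_lipschitz_affine _ Hf) as [L [HL Hlip]].
  destruct (le_ind n (image_controlled_cover f n) (image_controlled_cover_init _ _ f L HL Hlip n HY)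
    (fun q Hq => image_controlled_cover_succ _ _ f L HL Hlip n q Hq) (m + n) ltac:(lia))
    as [KB [HKB HB]].
  destruct (le_ind m (fibre_controlled_cover f m) (fibre_controlled_cover_init _ _ f m n HM HY)
    (fun q Hq => fibre_controlled_cover_succ _ _ f L HL Hlip m q Hq) (m + n) ltac:(lia))
    as [KF [HKF HF]].
  apply (asdimAN_le_of_chain_diam_le_covers X (m + n) (KF * (KB + 1))); [nra|intros r Hr].
  destruct (HB r Hr) as [Q [HQm HQb]].
  destruct (HF r (KB * (r + 1)) Hr ltac:(nra)) as [C [HCm HCb]].
  exists (fun p x => C p x /\ Q p x); split.
  - intros x; apply (ex_common_of_misses_le _ _ _ m n); auto; lia.
  - intros p Hp; replace (KF * (KB + 1) * (r + 1)) with (KF * (r + KB * (r + 1) + 1)) by ring.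
    apply (chain_diam_le_inter X Y f _ _ r (KB * (r + 1))); auto.
Qed.
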